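(* Let $G$ be a graph on $n$ vertices without isolated vertices. For every $n-i\gamma(G)$ covers $W_1,\dots,W_{n-i\gamma(G)}$ of $G$, there is a cover $W$ of $G$ of the form $W=\{w_{i_1},\dots,w_{i_k}\}$ with $1\le i_1<\dots<i_k\le n-i\gamma(G)$ and $w_{i_j}\in W_{i_j}$ for each $j\in[k]$.
   Context: A cover of $G$ is a set $W\subseteq V(G)$ containing at least one endpoint of every edge. $\gamma(G;A)$ is the minimum size of a set $D$ such that every vertex of $A$ has a neighbor in $D$; $i\gamma(G)=\max\{\gamma(G;I): I\text{ an independent set of }G\}$. *)

(* A simple graph on a finite vertex type T is a symmetric,
   irreflexive boolean relation e : rel T; V(G) = T, n = #|T|. *)
From mathcomp Require Import all_boot.
Set Implicit Arguments. Unset Strict Implicit. Unset Printing Implicit Defensive.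

Definition simple_graph (T : finType) (e : rel T) : Prop :=
  symmetric e /\ irreflexive e.

Definition no_isolated (T : finType) (e : rel T) : Prop :=
  forall x : T, exists y : T, e x y.

Definition is_cover (T : finType) (e : rel T) (W : {set T}) : Prop :=
  forall x y : T, e x y -> (x \in W) || (y \in W).

Definition independent (T : finType) (e : rel T) (I : {set T}) : bool :=
  [forall x in I, forall y in I, ~~ e x y].

Definition dominates_nb (T : finType) (e : rel T) (A D : {set T}) : bool :=
  [forall a in A, exists d in D, e a d].

(* The default #|T| is harmless: whenever some D works, #|D| <= #|T|; when G has
   no isolated vertices, D = [set: T] always works. *)
Definition gammaA (T : finType) (e : rel T) (A : {set T}) : nat :=
  \big[minn/#|T|]_(D : {set T} | dominates_nb e A D) #|D|.

Definition igamma (T : finType) (e : rel T) : nat :=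
  \max_(I : {set T} | independent e I) gammaA e I.

(* Induction on the number of vertices, carrying an independent set I and a
   lower bound c on gamma(G;I) with n <= (number of covers) + c.  If some cover
   W_i contains a vertex w outside I, put w in the rainbow cover, delete w and
   the vertices it leaves isolated, and recurse on the remaining covers; if a
   vertex a of I became isolated, its only neighbour was w, so c may drop by
   one while n drops by two.  Otherwise every cover meets the graph inside I,
   hence contains I (each vertex of I has a neighbour outside I), every edge
   meets I, and I is itself a rainbow cover since V \ I dominates I gives
   |I| <= n - c <= number of covers. *)

From mathcomp Require Import all_boot zify.

Set Implicit Arguments. Unset Strict Implicit. Unset Printing Implicit Defensive.

Lemma bigmin_leq (I : finType) (P : pred I) (F : I -> nat) x i0 :
  P i0 -> \big[minn/x]_(i | P i) F i <= F i0.
Proof.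
move=> Pi0; have : i0 \in index_enum I := mem_index_enum i0.
elim: (index_enum I) => //= j r IHr; rewrite big_cons inE.
case/predU1P => [<- | /IHr le_r]; first by rewrite Pi0 geq_minl.
by case: (P j) => //; apply: leq_trans (geq_minr _ _) le_r.
Qed.

Lemma imset_update (aT rT : finType) (f : aT -> rT) (S : {set aT}) i0 y :
  i0 \notin S ->
  [set (if i == i0 then y else f i) | i in i0 |: S] = y |: [set f i | i in S].
Proof.
move=> i0S; rewrite imsetU1 eqxx; congr (_ |: _); apply: eq_in_imset => i Si.
by case: eqP => // ii0; rewrite -ii0 Si in i0S.
Qed.

Lemma rainbow_of_card_leq (T K : finType) (x0 : T) (A : {set T}) (S0 : {set K}) :
  #|A| <= #|S0| ->
  exists (S : {set K}) (w : K -> T), S \subset S0 /\ [set w i | i in S] = A.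
Proof.
move HA: #|A| => n; elim: n A S0 HA => [|n IHn] A S0 HA leAS0.
  exists set0, (fun=> x0); rewrite sub0set imset0; split=> //.
  by apply/esym/eqP; rewrite -cards_eq0 HA.
have [a Aa] : exists a, a \in A by apply/set0Pn; rewrite -card_gt0 HA.
have [i0 S0i0] : exists i0, i0 \in S0 by apply/set0Pn; rewrite -card_gt0; lia.
have cardAa : #|A :\ a| = n by move: HA; rewrite (cardsD1 a) Aa; lia.
have leAS0i0 : n <= #|S0 :\ i0| by move: leAS0; rewrite (cardsD1 i0 S0) S0i0; lia.
have [S [w [sSS0 wS]]] := IHn _ _ cardAa leAS0i0.
have i0S : i0 \notin S by apply/negP => /(subsetP sSS0); rewrite !inE eqxx.
exists (i0 |: S), (fun i => if i == i0 then a else w i); split.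
  by rewrite subUset sub1set S0i0 (subset_trans sSS0) ?subD1set.
by rewrite imset_update // wS setD1K.
Qed.

Section RainbowCover.

Variables (T : finType) (e : rel T).
Hypothesis e_sym : symmetric e.

Definition covers_in (V W : {set T}) : Prop :=
  forall x y, x \in V -> y \in V -> e x y -> (x \in W) || (y \in W).

Definition no_isolated_in (V : {set T}) : Prop :=
  forall x, x \in V -> exists2 y, y \in V & e x y.

Definition gammaA_lb (I : {set T}) (c : nat) : Prop :=
  forall D, dominates_nb e I D -> c <= #|D|.

Definition rainbow_cover_in (K : finType) (W : K -> {set T}) (S0 : {set K})
    (V : {set T}) : Prop :=
  exists (S : {set K}) (w : K -> T),
    [/\ S \subset S0, forall i, i \in S -> w i \in W i
      & covers_in V [set w i | i in S]].

Definition prune (V : {set T}) (w : T) : {set T} :=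
  [set x in V | (x != w) && [exists y in V, (y != w) && e x y]].

Lemma independentP (I : {set T}) x y :
  independent e I -> x \in I -> y \in I -> ~~ e x y.
Proof. by move=> /forall_inP indI /indI /forall_inP; apply. Qed.

Lemma independent_subset (I J : {set T}) :
  J \subset I -> independent e I -> independent e J.
Proof.
move=> sJI indI; apply/forall_inP => x Jx; apply/forall_inP => y Jy.
exact: independentP indI (subsetP sJI x Jx) (subsetP sJI y Jy).
Qed.

Lemma covers_in_subset (V V' W : {set T}) :
  V' \subset V -> covers_in V W -> covers_in V' W.
Proof. by move=> sV'V covW x y V'x V'y; apply: covW; apply: (subsetP sV'V). Qed.

Lemma prune_subset (V : {set T}) w : prune V w \subset V :\ w.
Proof. by apply/subsetP => x; rewrite !inE => /and3P[-> -> _]. Qed.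

Lemma mem_prune (V : {set T}) w x y :
  x \in V -> y \in V -> x != w -> y != w -> e x y -> x \in prune V w.
Proof.
by move=> Vx Vy xw yw exy; rewrite inE Vx xw; apply/exists_inP; exists y; rewrite ?yw.
Qed.

Lemma no_isolated_prune (V : {set T}) w : no_isolated_in (prune V w).
Proof.
move=> x; rewrite inE => /and3P[Vx xw /exists_inP[y Vy /andP[yw exy]]].
by exists y => //; apply: mem_prune Vy Vx yw xw _; rewrite e_sym.
Qed.

Lemma covers_in_prune (V W : {set T}) w :
  covers_in (prune V w) W -> covers_in V (w |: W).
Proof.
move=> covW x y Vx Vy exy; rewrite !inE.
have [-> // | xw] := eqVneq x w.
have [-> | yw] := eqVneq y w; first by rewrite orbT.
have eyx : e y x by rewrite e_sym.
have /orP[-> | ->] := covW x y (mem_prune Vx Vy xw yw exy)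
  (mem_prune Vy Vx yw xw eyx) exy; by rewrite !orbT.
Qed.

Lemma card_prune_lt (V : {set T}) w : w \in V -> #|prune V w| < #|V|.
Proof.
move=> Vw; apply: leq_ltn_trans (subset_leq_card (prune_subset V w)) _.
by rewrite [X in _ < X](cardsD1 w) Vw.
Qed.

Lemma card_prune_lt2 (V : {set T}) w a :
  w \in V -> a \in V -> a != w -> a \notin prune V w -> #|prune V w|.+1 < #|V|.
Proof.
move=> Vw Va aw nPa.
have : prune V w \subset V :\ w :\ a.
  apply/subsetP => x Px; rewrite in_setD1 (subsetP (prune_subset V w) x Px) andbT.
  by apply/eqP => xa; rewrite -xa Px in nPa.
move/subset_leq_card; rewrite [X in _ < X](cardsD1 w) (cardsD1 a (V :\ w)) Vw !inE aw Va.
lia.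
Qed.

(* A vertex of I left isolated by the pruning had w as its only neighbour in V,
   so w |: D dominates I whenever D dominates what is left of I. *)
Lemma gammaA_lb_prune (V I : {set T}) w c :
  no_isolated_in V -> I \subset V -> w \notin I -> gammaA_lb I c ->
  gammaA_lb (I :&: prune V w) c.-1.
Proof.
move=> nisoV sIV Iw lbI D domD.
suff /lbI : dominates_nb e I (w |: D) by rewrite cardsU1; case: (w \notin D); lia.
apply/forall_inP => a Ia; have Va := subsetP sIV a Ia.
have [Pa | nPa] := boolP (a \in prune V w).
  have IPa : a \in I :&: prune V w by rewrite inE Ia Pa.
  have /exists_inP[d Dd ead] := forall_inP domD a IPa.
  by apply/exists_inP; exists d; rewrite // inE Dd orbT.
have [y Vy eay] := nisoV a Va.
apply/exists_inP; exists w; first by rewrite setU11.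
have aw : a != w by apply/eqP => aw; rewrite -aw Ia in Iw.
have [<- // | yw] := eqVneq y w.
by rewrite (mem_prune Va Vy aw yw eay) in nPa.
Qed.

Lemma gammaA_lb_compl (V I : {set T}) c :
  no_isolated_in V -> I \subset V -> independent e I -> gammaA_lb I c ->
  c <= #|V :\: I|.
Proof.
move=> nisoV sIV indI lbI; apply: lbI; apply/forall_inP => a Ia.
have [y Vy eay] := nisoV a (subsetP sIV a Ia).
apply/exists_inP; exists y => //; rewrite inE Vy andbT.
by apply: contraL eay => Iy; apply: independentP indI Ia Iy.
Qed.

Lemma rainbow_cover_in_independent (K : finType) (x0 : T) (W : K -> {set T})
    (S0 : {set K}) (V I : {set T}) c :
  no_isolated_in V -> I \subset V -> independent e I -> gammaA_lb I c ->
  #|V| <= #|S0| + c -> (forall i, i \in S0 -> covers_in V (W i)) ->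
  (forall i, i \in S0 -> W i :&: V \subset I) ->
  rainbow_cover_in W S0 V.
Proof.
move=> nisoV sIV indI lbI leV covW sWI.
have sIW i : i \in S0 -> I \subset W i.
  move=> S0i; apply/subsetP => a Ia; have Va := subsetP sIV a Ia.
  have [y Vy eay] := nisoV a Va.
  case/orP: (covW i S0i a y Va Vy eay) => // Wy.
  have Iy : y \in I by apply: (subsetP (sWI i S0i)); rewrite inE Wy Vy.
  by rewrite (negbTE (independentP indI Ia Iy)) in eay.
have leIS0 : #|I| <= #|S0|.
  have := gammaA_lb_compl nisoV sIV indI lbI; rewrite cardsD (setIidPr sIV).
  have := subset_leq_card sIV; lia.
have [S [w [sSS0 wSI]]] := rainbow_of_card_leq x0 leIS0.
exists S, w; split=> // [i Si | x y Vx Vy exy].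
  by apply: (subsetP (sIW i (subsetP sSS0 i Si))); rewrite -wSI imset_f.
have [S0_0 | [i S0i]] := set_0Vmem S0.
  have I0 : I = set0 by apply/eqP; rewrite -cards_eq0 -leqn0 -(cards0 K) -S0_0.
  have c0 : c <= 0 by rewrite -(cards0 T); apply: lbI; apply/forall_inP => a; rewrite I0 inE.
  have : #|V| == 0 by rewrite -leqn0 (leq_trans leV) // S0_0 cards0.
  by rewrite cards_eq0 => /eqP V0; rewrite V0 inE in Vx.
have inI z : z \in V -> z \in W i -> z \in [set w i | i in S].
  by move=> Vz Wz; rewrite wSI; apply: (subsetP (sWI i S0i)); rewrite inE Wz.
by case/orP: (covW i S0i x y Vx Vy exy) => /inI ->; rewrite ?orbT.
Qed.

Lemma rainbow_cover_in_prune (K : finType) (W : K -> {set T}) (S0 : {set K})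
    (V : {set T}) i0 w :
  i0 \in S0 -> w \in W i0 -> rainbow_cover_in W (S0 :\ i0) (prune V w) ->
  rainbow_cover_in W S0 V.
Proof.
move=> S0i0 Ww [S [w' [sS w'W covS]]].
have i0S : i0 \notin S by apply/negP => /(subsetP sS); rewrite !inE eqxx.
exists (i0 |: S), (fun i => if i == i0 then w else w' i); split.
- by rewrite subUset sub1set S0i0 (subset_trans sS) ?subD1set.
- by move=> i; rewrite !inE; case: eqP => [-> // | _ /= Si]; apply: w'W.
by rewrite imset_update //; apply: covers_in_prune.
Qed.

Lemma rainbow_cover_in_of_card (K : finType) (x0 : T) (W : K -> {set T})
    (S0 : {set K}) (V I : {set T}) c :
  no_isolated_in V -> I \subset V -> independent e I -> gammaA_lb I c ->
  #|V| <= #|S0| + c -> (forall i, i \in S0 -> covers_in V (W i)) ->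
  rainbow_cover_in W S0 V.
Proof.
move Hn: #|V| => n; elim/ltn_ind: n V I S0 c Hn => n IHn V I S0 c Hn.
move=> nisoV sIV indI lbI leV covW.
have [[i0 w] /= /and4P[S0i0 Ww Vw Iw] | noA] :=
  pickP (fun p : K * T => [&& p.1 \in S0, p.2 \in W p.1, p.2 \in V & p.2 \notin I]).
  apply: (rainbow_cover_in_prune S0i0 Ww); set V' := prune V w.
  have sV'V : V' \subset V := subset_trans (prune_subset V w) (subD1set V w).
  have ltV' : #|V'| < n by rewrite -Hn card_prune_lt.
  have cardS0 : #|S0| = #|S0 :\ i0|.+1 by rewrite (cardsD1 i0) S0i0.
  have covW' i : i \in S0 :\ i0 -> covers_in V' (W i).
    by case/setD1P=> _ /covW; apply: covers_in_subset.
  have [sIV' | /subsetPn[a Ia V'a]] := boolP (I \subset V').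
    apply: (IHn _ ltV' V' I _ c) => //; first exact: no_isolated_prune.
    by move: ltV'; rewrite -Hn; lia.
  apply: (IHn _ ltV' V' (I :&: V') _ c.-1) => //.
  - exact: no_isolated_prune.
  - exact: subsetIr.
  - exact: independent_subset (subsetIl I V') indI.
  - exact: gammaA_lb_prune.
  have aw : a != w by apply/eqP => aw; rewrite -aw Ia in Iw.
  by have := card_prune_lt2 Vw (subsetP sIV a Ia) aw V'a; rewrite -/V' Hn; lia.
apply: (rainbow_cover_in_independent x0 nisoV sIV indI lbI _ covW) => [|i S0i].
  by rewrite Hn.
apply/subsetP => z /setIP[Wz Vz]; move: (noA (i, z)) => /=.
by rewrite S0i Wz Vz /=; case: (z \in I).
Qed.

End RainbowCover.

Theorem corollary3p3 (T : finType) (e : rel T)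
  (Hg : simple_graph e) (Hiso : no_isolated e)
  (Ws : 'I_(#|T| - igamma e) -> {set T})
  (Hcov : forall i, is_cover e (Ws i)) :
  exists (S : {set 'I_(#|T| - igamma e)}) (w : 'I_(#|T| - igamma e) -> T),
    (forall i, i \in S -> w i \in Ws i) /\ is_cover e [set w i | i in S].
Proof.
case: Hg => e_sym _.
have [x0 _ | T0] := pickP (@predT T); last first.
  have w : 'I_(#|T| - igamma e) -> T by case=> i; rewrite (eq_card0 T0) sub0n ltn0.
  by exists set0, w; split=> [i | x]; [rewrite inE | have := T0 x].
have indI0 : independent e set0 by apply/forall_inP => x; rewrite inE.
set I := [arg max_(I > set0 | independent e I) gammaA e I].
have indI : independent e I by rewrite /I; case: arg_maxnP.
have lbI : gammaA_lb e I (igamma e).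
  by rewrite /igamma (bigmax_eq_arg set0 indI0) => D; apply: bigmin_leq.
have : rainbow_cover_in e Ws [set: 'I_(#|T| - igamma e)] [set: T].
  apply: (rainbow_cover_in_of_card e_sym x0 _ (subsetT I) indI lbI).
  - by move=> x _; have [y exy] := Hiso x; exists y; rewrite ?inE.
  - by rewrite !cardsT card_ord; lia.
  - by move=> i _ x y _ _; apply: Hcov.
case=> S [w [_ wW covS]]; exists S, w; split=> // x y exy.
exact: covS.
Qed.
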